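(* Let $\Omega\subset\mathbb{R}^N$ be a bounded domain with Lipschitz boundary, $s\in(0,1)$, $p\in(1,+\infty)$. For $\delta>0$ define $\mathcal{J}_{\delta,s,p}:L^p(\Omega)\to[0,+\infty]$ by $\mathcal{J}_{\delta,s,p}(u)=[u]_{W^{\delta,s,p}(\Omega_{\delta})}^p$ (with $u$ extended by zero outside $\Omega$). Then, with respect to the strong topology of $L^p(\Omega)$, $\mathcal{J}_{\delta,s,p}$ $\Gamma$-converges as $\delta\to+\infty$ to $\mathcal{J}_{\infty,s,p}(u)=[u]_{W^{s,p}(\mathbb{R}^N)}^p$ (with $u$ extended by zero outside $\Omega$), for all $u\in L^p(\Omega)$.
   Context: Here $\partial_\delta\Omega=\{y\in\mathbb{R}^N\setminus\Omega: |x-y|<\delta \text{ for some } x\in\Omega\}$, $\Omega_\delta=\Omega\cup\partial_\delta\Omega$, $[u]_{W^{\delta,s,p}(\Omega_{\delta})}^p=\int_{\Omega_{\delta}}\int_{\Omega_{\delta}\cap B(x,\delta)}\frac{|u(x)-u(y)|^p}{|x-y|^{N+sp}}dydx$ and $[u]_{W^{s,p}(\mathbb{R}^N)}^p=\int_{\mathbb{R}^N}\int_{\mathbb{R}^N}\frac{|u(x)-u(y)|^p}{|x-y|^{N+sp}}dydx$, both possibly $+\infty$. *)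

From HB Require Import structures.
From mathcomp Require Import all_boot all_order all_algebra.
From mathcomp Require Import all_classical all_reals all_analysis.
Set Implicit Arguments. Unset Strict Implicit. Unset Printing Implicit Defensive.
Import Order.TTheory GRing.Theory Num.Theory.
Local Open Scope classical_set_scope.
Local Open Scope ring_scope.

Section Defs.
Variable R : realType.

(* Points of R^N are N-tuples of reals (carrying the product = Borel
   sigma-algebra of the library). *)
Definition vsub N (x y : N.-tuple R) : N.-tuple R :=
  [tuple tnth x i - tnth y i | i < N].
Definition vscale N (a : R) (x : N.-tuple R) : N.-tuple R :=
  [tuple a * tnth x i | i < N].
Definition dot N (x y : N.-tuple R) : R := \sum_(i < N) tnth x i * tnth y i.
Definition enorm N (x : N.-tuple R) : R := Num.sqrt (dot x x).
Definition edist N (x y : N.-tuple R) : R := enorm (vsub x y).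
Definition eball N (x : N.-tuple R) (r : R) : set (N.-tuple R) :=
  [set y | edist x y < r].

Definition eopen N (A : set (N.-tuple R)) : Prop :=
  forall x, A x -> exists2 r : R, 0 < r & eball x r `<=` A.
Definition econnected N (A : set (N.-tuple R)) : Prop :=
  ~ (exists U V : set (N.-tuple R), [/\ eopen U, eopen V, A `<=` U `|` V,
        A `&` U !=set0 /\ A `&` V !=set0 & A `&` U `&` V = set0]).
Definition ebounded N (A : set (N.-tuple R)) : Prop :=
  exists M : R, forall x, A x -> enorm x <= M.
Definition domain N (A : set (N.-tuple R)) : Prop :=
  [/\ A !=set0, eopen A & econnected A].
Definition eboundary N (A : set (N.-tuple R)) : set (N.-tuple R) :=
  [set x | forall r : R, 0 < r ->
     eball x r `&` A !=set0 /\ eball x r `&` ~` A !=set0].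

(* Lipschitz boundary: near every boundary point x0, in some orthonormal
   coordinate system (z, t) with z in the hyperplane e^perp and t the
   coordinate along the unit vector e, A is the subgraph {t < g z} of a
   Lipschitz function g defined on e^perp. *)
Definition lipschitz_boundary N (A : set (N.-tuple R)) : Prop :=
  forall x0, eboundary A x0 ->
  exists r : R, exists e : N.-tuple R, exists L : R,
  exists g : N.-tuple R -> R,
  [/\ 0 < r, enorm e = 1, 0 <= L,
      (forall z1 z2, dot z1 e = 0 -> dot z2 e = 0 ->
         `|g z1 - g z2| <= L * edist z1 z2) &
      (forall x, eball x0 r x ->
         (A x <-> dot (vsub x x0) e <
                   g (vsub (vsub x x0) (vscale (dot (vsub x x0) e) e))))].

(* Lebesgue integral on R^N of a nonnegative function, as the iterated
   integral w.r.t. the one-dimensional Lebesgue measure (Tonelli). *)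
Fixpoint iint (N : nat) : (N.-tuple R -> \bar R) -> \bar R :=
  match N with
  | 0 => fun f => f [tuple]
  | n.+1 => fun f =>
      (\int[@lebesgue_measure R]_(x in [set: R])
          iint (fun t : n.-tuple R => f [tuple of x :: t]))%E
  end.

Definition iint_on N (A : set (N.-tuple R)) (f : N.-tuple R -> \bar R) :=
  iint (fun x => if `[< A x >] then f x else 0%E).

Definition zext N (Om : set (N.-tuple R)) (u : N.-tuple R -> R) :=
  fun x => if `[< Om x >] then u x else 0.

Definition inLp N (Om : set (N.-tuple R)) (p : R) (u : N.-tuple R -> R) :=
  measurable_fun [set: N.-tuple R] (zext Om u) /\
  (iint_on Om (fun x => (`|u x| `^ p)%:E) < +oo)%E.

Definition Lp_cvg N (Om : set (N.-tuple R)) (p : R)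
    (un : nat -> N.-tuple R -> R) (u : N.-tuple R -> R) :=
  (fun n => iint_on Om (fun x => (`|un n x - u x| `^ p)%:E)) @ \oo --> 0%E.

Definition Om_delta N (Om : set (N.-tuple R)) (d : R) : set (N.-tuple R) :=
  Om `|` [set y | ~ Om y /\ exists2 x, Om x & edist x y < d].

Definition gkernel N (s p : R) (v : N.-tuple R -> R) (x y : N.-tuple R) :=
  (`|v x - v y| `^ p / edist x y `^ (N%:R + s * p))%:E.

Definition J_delta N (Om : set (N.-tuple R)) (s p d : R) (u : N.-tuple R -> R)
  : \bar R :=
  iint_on (Om_delta Om d) (fun x =>
    iint_on (Om_delta Om d `&` eball x d) (fun y =>
      gkernel s p (zext Om u) x y)).

Definition J_infty N (Om : set (N.-tuple R)) (s p : R) (u : N.-tuple R -> R)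
  : \bar R :=
  iint (fun x => iint (fun y => gkernel s p (zext Om u) x y)).

Definition Gamma_cvg_pinfty N (Om : set (N.-tuple R)) (p : R)
    (F : R -> (N.-tuple R -> R) -> \bar R) (G : (N.-tuple R -> R) -> \bar R) :=
  forall dn : nat -> R, dn @ \oo --> +oo ->
  forall u, inLp Om p u ->
  (forall un : nat -> N.-tuple R -> R, (forall n, inLp Om p (un n)) ->
     Lp_cvg Om p un u -> (G u <= limn_einf (fun n => F (dn n) (un n)))%E) /\
  (exists2 un : nat -> N.-tuple R -> R, (forall n, inLp Om p (un n)) &
     Lp_cvg Om p un u /\ (limn_esup (fun n => F (dn n) (un n)) <= G u)%E).

End Defs.

From Pilot Require Import Defs.
From HB Require Import structures.
From mathcomp Require Import all_boot all_order all_algebra.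
From mathcomp Require Import all_classical all_reals all_analysis.
From mathcomp Require Import measurable_realfun lebesgue_integral_fubini.
From mathcomp Require Import ring.
Import Order.TTheory GRing.Theory Num.Theory.
Import numFieldTopology.Exports numFieldNormedType.Exports.
Local Open Scope classical_set_scope.
Local Open Scope ring_scope.
Set Implicit Arguments. Unset Strict Implicit.

(* The recovery sequence is constant: the integrand of J_delta is that of
   J_infty restricted to a smaller domain, so J_delta <= J_infty.  For the
   liminf inequality, extract a subsequence along which J_delta(u_n) stays
   below a given c > liminf and ||u_n - u||_p^p <= 2^-(k+1); then
   sum_k |u_k - u|^p is integrable, hence finite off a null set E, so
   u_k -> u off E.  Since Omega_delta contains the ball B(x0, delta) around a
   point x0 of Omega, J_delta(u_n) dominates the Gagliardo energy of u_n
   restricted to {x, y in B(x0, delta), |x - y| < delta}; these truncated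
   kernels converge to the full kernel off E x E, and Fatou's lemma in each
   variable gives J_infty(u) <= c. *)

Section integral_complements.
Context d (T : measurableType d) (R : realType) (mu : {measure set T -> \bar R}).
Local Open Scope ereal_scope.

Lemma ge0_le_integralT (f g : T -> \bar R) : (forall x, 0 <= f x) ->
  (forall x, f x <= g x) -> \int[mu]_x f x <= \int[mu]_x g x.
Proof.
move=> f0 fg; have g0 x : 0 <= g x := le_trans (f0 x) (fg x).
rewrite !ge0_integralTE //; apply: ereal_sup_le => _ [h /= hf <-].
by exists h => //= x; exact: le_trans (hf x) (fg x).
Qed.

Lemma integral0_or_y (f : T -> \bar R) : measurable_fun setT f ->
  (forall x, f x = 0 \/ f x = +oo) ->
  \int[mu]_x f x = 0 \/ \int[mu]_x f x = +oo.
Proof.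
move=> mf f0y.
have mI : measurable [set x | f x = +oo].
  by have := mf measurableT _ (emeasurable_set1 +oo); rewrite setTI.
have -> : \int[mu]_x f x = \int[mu]_(x in [set x | f x = +oo]) cst +oo x.
  rewrite [RHS]integral_mkcond; apply: eq_integral => x _; rewrite /patch.
  case: ifPn => [/set_mem -> //|/negP fxy].
  by case: (f0y x) => // fx; exfalso; apply: fxy; exact: mem_set.
rewrite integral_cst //.
have := measure_ge0 mu [set x | f x = +oo]; rewrite le_eqVlt => /orP[/eqP <-|].
  by left; rewrite mule0.
by move=> /gt0_mulye ->; right.
Qed.

End integral_complements.

Definition oo_indic (T : Type) (R : realType) (E : set T) (x : T) : \bar R :=
  if x \in E then +oo%E else 0%E.

Section oo_indic.
Context d (T : measurableType d) {R : realType}.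
Local Open Scope ereal_scope.

Lemma oo_indic_ge0 (E : set T) x : 0 <= oo_indic R E x.
Proof. by rewrite /oo_indic; case: ifP. Qed.

Lemma oo_indic0_or_y (E : set T) x : oo_indic R E x = 0 \/ oo_indic R E x = +oo.
Proof. by rewrite /oo_indic; case: ifP; [right|left]. Qed.

Lemma measurable_oo_indic (E : set T) : measurable E ->
  measurable_fun setT (oo_indic R E).
Proof.
move=> mE; apply: measurable_fun_ifT => //; apply: (measurable_fun_bool true).
rewrite setTI (_ : _ @^-1` _ = E) //.
by apply/seteqP; split => x /=; [move/set_mem|move/mem_set].
Qed.

End oo_indic.

Section liminf_complements.
Context {R : realType}.
Implicit Types u v : (\bar R)^nat.
Local Open Scope ereal_scope.

Lemma limn_einfE u : limn_einf u = ereal_sup (range (einfs u)).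
Proof. by rewrite limn_einf_lim; apply: cvg_lim => //; exact: cvg_einfs_sup. Qed.

Lemma le_limn_einf u v : (forall n, u n <= v n) -> limn_einf u <= limn_einf v.
Proof.
move=> uv; rewrite !limn_einfE; apply: ge_ereal_sup => _ [n _ <-].
apply: le_trans (ereal_sup_ubound _); last by exists n.
apply: le_ereal_inf_tmp => _ [k /= nk <-].
by apply: le_trans (uv k); apply: ereal_inf_lbound; exists k.
Qed.

Lemma limn_einf_cst (c : \bar R) : limn_einf (fun _ => c) = c.
Proof. by have [-> _] := cvg_limn_einf_sup (cvg_cst c). Qed.

Lemma limn_einf_ge0 u : (forall n, 0 <= u n) -> 0 <= limn_einf u.
Proof. by move=> u0; rewrite -(limn_einf_cst 0); exact: le_limn_einf. Qed.

Lemma limn_einf_le u c : (forall n, u n <= c) -> limn_einf u <= c.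
Proof. by move=> uc; rewrite -(limn_einf_cst c); exact: le_limn_einf. Qed.

Lemma limn_esup_le u c : (forall n, u n <= c) -> limn_esup u <= c.
Proof.
move=> uc; have -> : limn_esup u = - limn_einf (-%E \o u).
  by rewrite limn_einfN oppeK.
rewrite leeNl -(limn_einf_cst (- c)); apply: le_limn_einf => n /=.
by rewrite leeN2.
Qed.

Lemma limn_einf_lt u c : limn_einf u < c ->
  forall m, exists2 n, (m <= n)%N & u n < c.
Proof.
move=> uc m; have : einfs u m < c.
  by apply: le_lt_trans uc; rewrite limn_einfE; apply: ereal_sup_ubound; exists m.
by move=> /ereal_inf_lt[_ [n /= mn <-] unc]; exists n.
Qed.

Lemma limn_einf_lt_subseq u (e : (\bar R)^nat) (eps : nat -> R) c :
  e @ \oo --> 0 -> (forall k, (0 < eps k)%R) -> limn_einf u < c ->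
  exists phi : nat -> nat,
    forall k, [/\ (k <= phi k)%N, e (phi k) <= (eps k)%:E & u (phi k) < c].
Proof.
move=> e0 eps_gt0 uc.
suff /choice[phi ?] : forall k, exists n,
  [/\ (k <= n)%N, e n <= (eps k)%:E & u n < c] by exists phi.
move=> k; have [efin ecvg] := (fine_cvgP e 0%R).1 e0.
have [M _ eM] : \forall n \near \oo, e n <= (eps k)%:E.
  near=> n; have efn : e n \is a fin_num by near: n.
  by rewrite -(fineK efn) lee_fin ltW //; near: n; exact: cvgr_lt 0%R ecvg _ (eps_gt0 k).
have [n Mkn unc] := limn_einf_lt uc (maxn k M).
exists n; split => //; first exact: leq_trans (leq_maxl k M) Mkn.
by apply: eM; exact: leq_trans (leq_maxr k M) Mkn.
Unshelve. all: end_near.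
Qed.

Lemma ge0_lee_gt (x y : \bar R) : 0 <= y ->
  (forall c : R, y < c%:E -> x <= c%:E) -> x <= y.
Proof.
case: y => [r _ xc|_ _|//]; last exact: leey.
by apply/lee_addgt0Pr => e e0; rewrite -EFinD; apply: xc; rewrite lte_fin ltrDl.
Qed.

Lemma measurable_fun_limn_einf d (T : measurableType d) D (f : (T -> \bar R)^nat) :
  (forall n, measurable_fun D (f n)) ->
  measurable_fun D (fun x => limn_einf (f ^~ x)).
Proof.
move=> mf; apply: measurableT_comp => //; apply: measurable_fun_limn_esup => n.
exact: measurableT_comp.
Qed.

End liminf_complements.

Section iterated_integral.
Context {R : realType}.
Local Notation leb := (@lebesgue_measure R).
Local Open Scope ereal_scope.

Lemma iint_ge0 N (f : N.-tuple R -> \bar R) : (forall x, 0 <= f x) -> 0 <= iint f.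
Proof.
elim: N f => [|n IH] f f0 /=; first exact: f0.
by apply: integral_ge0 => x _; apply: IH => t; exact: f0.
Qed.

Lemma le_iint N (f g : N.-tuple R -> \bar R) : (forall x, 0 <= f x) ->
  (forall x, f x <= g x) -> iint f <= iint g.
Proof.
elim: N f g => [|n IH] f g f0 fg /=; first exact: fg.
apply: ge0_le_integralT => x; first by apply: iint_ge0 => t; exact: f0.
by apply: IH => t; [exact: f0|exact: fg].
Qed.

Lemma iint0 N : iint (fun _ : N.-tuple R => 0) = 0.
Proof.
elim: N => [|n IH] //=.
by under eq_integral => x _ do rewrite IH; exact: integral0.
Qed.

Lemma measurable_cons_section n (f : n.+1.-tuple R -> \bar R) x :
  measurable_fun setT f ->
  measurable_fun setT (fun t : n.-tuple R => f [tuple of x :: t]).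
Proof.
move=> mf.
apply: (measurable_fun_pair2 (f := fun z : R * n.-tuple R => f [tuple of z.1 :: z.2])).
exact: measurableT_comp mf (measurable_cons measurable_fst measurable_snd).
Qed.

Lemma measurable_iint N d (X : measurableType d) (g : X -> N.-tuple R -> \bar R) :
  measurable_fun setT (fun z : X * N.-tuple R => g z.1 z.2) ->
  (forall a t, 0 <= g a t) -> measurable_fun setT (fun a => iint (g a)).
Proof.
elim: N d X g => [|n IH] d X g mg g0 /=.
  exact: measurableT_comp mg (measurable_fun_pair _ _).
pose h (z : X * R) (t : n.-tuple R) := g z.1 [tuple of z.2 :: t].
have mh : measurable_fun setT (fun z => iint (h z)).
  apply: IH => [|z t]; last exact: g0.
  have mcons : measurable_fun setT
      (fun w : X * R * n.-tuple R => (w.1.1, [tuple of w.1.2 :: w.2])).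
    apply: measurable_fun_pair => /=; first exact: measurableT_comp.
    by apply: measurable_cons => //; exact: measurableT_comp.
  exact: measurableT_comp mg mcons.
exact: (measurable_fun_fubini_tonelli_F (m2 := leb) _ mh
  (fun z => iint_ge0 (fun t => g0 _ _))).
Qed.

Lemma measurable_iint_section n (f : n.+1.-tuple R -> \bar R) :
  measurable_fun setT f -> (forall x, 0 <= f x) ->
  measurable_fun setT (fun x : R => iint (fun t => f [tuple of x :: t])).
Proof.
move=> mf f0; apply: (measurable_iint (g := fun x t => f [tuple of x :: t])) => //.
exact: measurableT_comp mf (measurable_cons measurable_fst measurable_snd).
Qed.

Lemma iintD N (f g : N.-tuple R -> \bar R) :
  (forall x, 0 <= f x) -> measurable_fun setT f ->
  (forall x, 0 <= g x) -> measurable_fun setT g ->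
  iint (fun x => f x + g x) = iint f + iint g.
Proof.
elim: N f g => [|n IH] f g f0 mf g0 mg //=.
transitivity (\int[leb]_x (iint (fun t => f [tuple of x :: t]) +
                            iint (fun t => g [tuple of x :: t]))).
  by apply: eq_integral => x _; apply: IH => //; exact: measurable_cons_section.
apply: ge0_integralD => //; do ?[by move=> x _; exact: iint_ge0];
  exact: measurable_iint_section.
Qed.

Lemma iint_sum N (g : nat -> N.-tuple R -> R) K :
  (forall k x, (0 <= g k x)%R) -> (forall k, measurable_fun setT (g k)) ->
  iint (fun x => (\sum_(k < K) g k x)%:E) = \sum_(k < K) iint (fun x => (g k x)%:E).
Proof.
move=> g0 mg; elim: K => [|K IH].
  by rewrite big_ord0; under eq_fun do rewrite big_ord0; exact: iint0.
rewrite big_ord_recr /= -IH; under eq_fun do rewrite big_ord_recr /= EFinD.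
apply: iintD => [x||x|]; rewrite ?lee_fin //.
- exact: sumr_ge0.
- by apply/measurable_EFinP; exact: measurable_sum.
- exact/measurable_EFinP.
Qed.

Lemma iint_fatou N (f : nat -> N.-tuple R -> \bar R) :
  (forall k, measurable_fun setT (f k)) -> (forall k x, 0 <= f k x) ->
  iint (fun x => limn_einf (f^~ x)) <= limn_einf (fun k => iint (f k)).
Proof.
elim: N f => [|n IH] f mf f0 //=.
apply: le_trans (fatou leb measurableT
  (f := fun k x => iint (fun t => f k [tuple of x :: t])) _ _).
- apply: ge0_le_integralT => x.
    by apply: iint_ge0 => t; exact: limn_einf_ge0.
  by apply: IH => k; first exact: measurable_cons_section.
- by move=> k; exact: measurable_iint_section.
- by move=> k x _; exact: iint_ge0.
Qed.

Lemma iint0_or_y N (h : N.-tuple R -> \bar R) : measurable_fun setT h ->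
  (forall x, h x = 0 \/ h x = +oo) -> iint h = 0 \/ iint h = +oo.
Proof.
elim: N h => [|n IH] h mh h0y /=; first exact: h0y.
apply: integral0_or_y.
  by apply: measurable_iint_section => // x; case: (h0y x) => ->.
by move=> x; apply: IH => [|t]; [exact: measurable_cons_section|exact: h0y].
Qed.

Definition iint_negligible N (E : set (N.-tuple R)) :=
  measurable E /\ iint (oo_indic R E) = 0.

Lemma iint_negligible_pinfty N (h : N.-tuple R -> \bar R) :
  measurable_fun setT h -> (forall x, 0 <= h x) -> iint h < +oo ->
  iint_negligible [set x | h x = +oo].
Proof.
move=> mh h0 hfin.
have mI : measurable [set x | h x = +oo].
  by have := mh measurableT _ (emeasurable_set1 +oo); rewrite setTI.
split => //; have : iint (oo_indic R [set x | h x = +oo]) <= iint h.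
  apply: le_iint => x; first exact: oo_indic_ge0.
  by rewrite /oo_indic; case: ifPn => [/set_mem /= ->|].
have [->|->] // := iint0_or_y (measurable_oo_indic mI) (oo_indic0_or_y _).
by move=> /le_lt_trans/(_ hfin); rewrite ltxx.
Qed.

(* Adding +oo on E changes no integral, and makes Fatou's lemma hold there. *)
Lemma iint_fatou_ae N (f : nat -> N.-tuple R -> \bar R) (g : N.-tuple R -> \bar R)
    (E : set (N.-tuple R)) : iint_negligible E ->
  (forall k, measurable_fun setT (f k)) -> (forall k x, 0 <= f k x) ->
  (forall x, 0 <= g x) -> (forall x, ~ E x -> g x <= limn_einf (f^~ x)) ->
  iint g <= limn_einf (fun k => iint (f k)).
Proof.
move=> [mE E0] mf f0 g0 gf; pose fE k x := f k x + oo_indic R E x.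
have mfE k : measurable_fun setT (fE k).
  by apply: emeasurable_funD => //; exact: measurable_oo_indic.
have -> : (fun k => iint (f k)) = (fun k => iint (fE k)).
  apply/funext => k; rewrite iintD ?E0 ?adde0 //.
    exact: oo_indic_ge0.
  exact: measurable_oo_indic.
apply: le_trans (iint_fatou mfE (fun k x => adde_ge0 (f0 k x) (oo_indic_ge0 _ _))).
apply: le_iint => // x; rewrite /fE /oo_indic; case: ifPn => [_|/negP xE].
  under eq_fun => k do rewrite addey ?gt_eqF ?(lt_le_trans _ (f0 k x)) ?ltNy0 //.
  by rewrite limn_einf_cst leey.
under eq_fun => k do rewrite adde0.
by apply: gf => Ex; apply: xE; exact: mem_set.
Qed.

End iterated_integral.

Section real_sequences.
Context {R : realType}.

Lemma cvg_powR (a p : R) (u : nat -> R) : 0 < a -> u @ \oo --> a ->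
  (fun k => u k `^ p) @ \oo --> a `^ p.
Proof.
move=> a0 ua; rewrite {2}/powR gt_eqF //.
apply: (@cvg_trans _ ((fun k => expR (p * ln (u k))) @ \oo)).
  apply: near_eq_cvg; near=> k; rewrite /powR gt_eqF //.
  by near: k; exact: cvgr_gt a ua 0 a0.
apply: continuous_cvg; first exact: continuous_expR.
by apply: cvgM; [exact: cvg_cst|exact: cvg_comp ua (continuous_ln a0)].
Unshelve. all: end_near.
Qed.

Lemma cvg_of_powR_dist (a : nat -> R) (b p : R) : 0 < p ->
  (fun k => `|a k - b| `^ p) @ \oo --> 0 -> a @ \oo --> b.
Proof.
move=> p0 /cvgrPdist_lt ab; apply/cvgrPdist_lt => e e0.
apply: filterS (ab _ (powR_gt0 p e0)) => k.
rewrite sub0r normrN ger0_norm ?powR_ge0 // distrC; apply: contraTT.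
rewrite -!leNgt => /(ge0_ler_powR (ltW p0)); rewrite !nnegrE.
by apply; [exact: ltW|exact: normr_ge0].
Qed.

Lemma ler_sum_ord (r : nat -> R) K K' : (forall k, 0 <= r k) -> (K <= K')%N ->
  \sum_(k < K) r k <= \sum_(k < K') r k.
Proof.
move=> r0 KK'; rewrite (big_ord_widen K' r KK').
rewrite [leRHS](bigID (fun i : 'I_K' => (i < K)%N)) /=.
by rewrite lerDl; exact: sumr_ge0.
Qed.

Lemma bounded_series_cvg0 (r : nat -> R) (B : R) : (forall k, 0 <= r k) ->
  (forall K, \sum_(k < K) r k <= B) -> r @ \oo --> 0.
Proof.
move=> r0 rB; apply: cvg_series_cvg_0; apply: nondecreasing_is_cvgn.
  by move=> n m nm; rewrite /series /= !big_mkord; exact: ler_sum_ord.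
by exists B => _ [n _ <-]; rewrite /series /= big_mkord.
Qed.

Lemma sum_halfX K : \sum_(k < K) (2^-1 : R) ^+ k.+1 = 1 - 2^-1 ^+ K.
Proof.
elim: K => [|K IH]; first by rewrite big_ord0 expr0 subrr.
rewrite big_ord_recr /= IH exprS.
have half2 : 2^-1 * 2^-1 ^+ K + 2^-1 * 2^-1 ^+ K = 2^-1 ^+ K :> R.
  by rewrite -mulrDl -[2^-1]mul1r -splitr mul1r.
by rewrite -{1}half2; ring.
Qed.

End real_sequences.

Section gagliardo_kernel.
Context {R : realType} {N : nat}.
Implicit Types (s p d : R) (x y : N.-tuple R) (v : N.-tuple R -> R).
Local Open Scope ereal_scope.

Lemma measurable_edist dX (X : measurableType dX) (f g : X -> N.-tuple R) :
  measurable_fun setT f -> measurable_fun setT g ->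
  measurable_fun setT (fun a => Defs.edist (f a) (g a)).
Proof.
move=> mf mg; rewrite /Defs.edist /enorm /dot.
apply: measurableT_comp (continuous_measurable_fun (@sqrt_continuous R)) _.
under eq_fun => a do under eq_bigr => i _ do rewrite /vsub tnth_mktuple.
by apply: measurable_sum => i; apply: measurable_funM; apply: measurable_funB;
  exact: measurableT_comp (measurable_tnth i) _.
Qed.

Lemma gkernel_ge0 s p v x y : 0 <= gkernel s p v x y.
Proof. by rewrite lee_fin divr_ge0 // powR_ge0. Qed.

Lemma measurable_gkernel s p v : measurable_fun setT v ->
  measurable_fun setT (fun z : N.-tuple R * N.-tuple R => gkernel s p v z.1 z.2).
Proof.
move=> mv; apply/measurable_EFinP; under eq_fun => z do rewrite -powRN.
apply: measurable_funM; apply: measurableT_comp (measurable_powR _) _.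
  apply: measurableT_comp (@normr_measurable _ setT) _.
  by apply: measurable_funB; exact: measurableT_comp mv _.
exact: measurable_edist.
Qed.

Definition trunc_gkernel (x0 : N.-tuple R) d s p v x y : \bar R :=
  if [&& Defs.edist x0 x < d, Defs.edist x0 y < d & Defs.edist x y < d]%R
  then gkernel s p v x y else 0.

Lemma trunc_gkernel_ge0 x0 d s p v x y : 0 <= trunc_gkernel x0 d s p v x y.
Proof. by rewrite /trunc_gkernel; case: ifP => // _; exact: gkernel_ge0. Qed.

Lemma measurable_trunc_gkernel x0 d s p v : measurable_fun setT v ->
  measurable_fun setT
    (fun z : N.-tuple R * N.-tuple R => trunc_gkernel x0 d s p v z.1 z.2).
Proof.
move=> mv; apply: measurable_fun_ifT; last 2 first.
- exact: measurable_gkernel.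
- exact: measurable_cst.
have mdist (f g : N.-tuple R * N.-tuple R -> N.-tuple R) :
    measurable_fun setT f -> measurable_fun setT g ->
    measurable_fun setT (fun z => Defs.edist (f z) (g z) < d)%R.
  move=> mf mg; apply: measurable_fun_ltr; last exact: measurable_cst.
  exact: measurable_edist.
by do 2?apply: measurable_and; apply: mdist.
Qed.

Lemma gkernel_eq_trunc_near x0 (dk : nat -> R) s p (w : nat -> N.-tuple R -> R) x y :
  dk @ \oo --> +oo%R ->
  \forall k \near \oo, gkernel s p (w k) x y = trunc_gkernel x0 (dk k) s p (w k) x y.
Proof.
move=> dk_oo; have far r : \forall k \near \oo, (r < dk k)%R.
  exact: (cvgryPgt dk).1 dk_oo r.
near=> k; rewrite /trunc_gkernel ifT //.
by apply/and3P; split; near: k; exact: far.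
Unshelve. all: end_near.
Qed.

Lemma cvg_gkernel s p v (w : nat -> N.-tuple R -> R) x y : (0 < `|v x - v y|)%R ->
  w^~ x @ \oo --> v x -> w^~ y @ \oo --> v y ->
  (fun k => gkernel s p (w k) x y) @ \oo --> gkernel s p v x y.
Proof.
move=> vxy wx wy; apply: cvg_EFin; first exact: nearW.
apply: cvgM; last exact: cvg_cst.
apply: cvg_powR vxy _.
by apply: cvg_norm; exact: cvgB wx wy.
Qed.

Lemma Om_delta_edist (Om : set (N.-tuple R)) d x0 y : Om x0 ->
  (Defs.edist x0 y < d)%R -> Om_delta Om d y.
Proof.
move=> Ox0 x0y; have [Oy|nOy] := pselect (Om y); [left|right] => //.
by split => //; exists x0.
Qed.

Lemma iint_trunc_gkernel_le_J_delta (Om : set (N.-tuple R)) s p d u x0 : Om x0 ->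
  iint (fun x => iint (fun y => trunc_gkernel x0 d s p (zext Om u) x y)) <=
  J_delta Om s p d u.
Proof.
move=> Ox0; apply: le_iint => x.
  by apply: iint_ge0 => y; exact: trunc_gkernel_ge0.
case: (asboolP (Om_delta Om d x)) => Ox; last first.
  rewrite (_ : (fun y => _) = fun=> 0) ?iint0 //; apply/funext => y.
  rewrite /trunc_gkernel; case: ifP => // /and3P[x0x _ _].
  by exfalso; apply: Ox; exact: Om_delta_edist x0x.
apply: le_iint => y; first exact: trunc_gkernel_ge0.
rewrite /trunc_gkernel; case: ifP => [/and3P[_ x0y xy]|_].
  by rewrite asboolT //; split => //; exact: Om_delta_edist x0y.
by case: asboolP => _ //; exact: gkernel_ge0.
Qed.

Lemma J_delta_ge0 (Om : set (N.-tuple R)) s p d u : 0 <= J_delta Om s p d u.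
Proof.
apply: iint_ge0 => x; case: asboolP => _ //; apply: iint_ge0 => y.
by case: asboolP => _ //; exact: gkernel_ge0.
Qed.

Lemma J_delta_le_J_infty (Om : set (N.-tuple R)) s p d u :
  J_delta Om s p d u <= J_infty Om s p u.
Proof.
rewrite /J_delta /J_infty /iint_on; apply: le_iint => x.
  case: asboolP => _ //; apply: iint_ge0 => y.
  by case: asboolP => _ //; exact: gkernel_ge0.
case: asboolP => _; last by apply: iint_ge0 => y; exact: gkernel_ge0.
apply: le_iint => y; first by case: asboolP => _ //; exact: gkernel_ge0.
by case: asboolP => _ //; exact: gkernel_ge0.
Qed.

End gagliardo_kernel.

Section liminf_inequality.
Context {R : realType} {N : nat}.
Local Open Scope ereal_scope.

Lemma iint_on_zext (Om : set (N.-tuple R)) (p : R) (w u : N.-tuple R -> R) :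
  p != 0%R -> iint_on Om (fun x => (`|w x - u x| `^ p)%:E) =
              iint (fun x => (`|zext Om w x - zext Om u x| `^ p)%:E).
Proof.
move=> p0; congr iint; apply/funext => x; rewrite /zext.
by case: asboolP => _ //; rewrite subrr normr0 powR0.
Qed.

Lemma ae_cvg_of_fast_Lp_cvg (p : R) (v : N.-tuple R -> R) (w : nat -> N.-tuple R -> R) :
  (0 < p)%R -> measurable_fun setT v -> (forall k, measurable_fun setT (w k)) ->
  (forall k, iint (fun x => (`|w k x - v x| `^ p)%:E) <= ((2^-1 : R) ^+ k.+1)%:E) ->
  exists2 E, iint_negligible E & forall x, ~ E x -> w^~ x @ \oo --> v x.
Proof.
move=> p0 mv mw fast; pose g k x := (`|w k x - v x| `^ p)%R.
have g0 k x : (0 <= g k x)%R by exact: powR_ge0.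
have mg k : measurable_fun setT (g k).
  apply: measurableT_comp (measurable_powR p) _.
  by apply: measurableT_comp (@normr_measurable _ setT) _; exact: measurable_funB.
pose P K x := (\sum_(k < K) g k x)%:E.
have P0 K x : 0 <= P K x by rewrite lee_fin; exact: sumr_ge0.
have mP K : measurable_fun setT (P K).
  by apply/measurable_EFinP; exact: measurable_sum.
pose S x := limn_einf (P^~ x).
have nE : iint_negligible [set x | S x = +oo].
  apply: iint_negligible_pinfty => [|x|]; first exact: measurable_fun_limn_einf.
    exact: limn_einf_ge0.
  apply: le_lt_trans (iint_fatou mP P0) _; apply: le_lt_trans (ltry 1%R).
  apply: limn_einf_le => K; rewrite iint_sum //.
  apply: (@le_trans _ _ (\sum_(k < K) ((2^-1 : R) ^+ k.+1)%:E)).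
    by apply: lee_sum => k _; exact: fast.
  by rewrite sumEFin lee_fin sum_halfX gerBl exprn_ge0 // invr_ge0.
exists [set x | S x = +oo] => // x Sx.
have Sfin : S x \is a fin_num.
  by rewrite ge0_fin_numE ?limn_einf_ge0 // lt_neqAle leey andbT; apply/eqP.
have /limn_einf_lt Slt : S x < (fine (S x) + 1)%:E.
  by rewrite -{1}(fineK Sfin) lte_fin ltrDl.
apply: cvg_of_powR_dist p0 (bounded_series_cvg0 (B := fine (S x) + 1) (g0^~ x) _) => K.
have [K' KK' /ltW SK'] := Slt K.
by apply: le_trans (ler_sum_ord (g0^~ x) KK') _; rewrite -lee_fin.
Qed.

Lemma gagliardo_le_limn_einf_trunc (x0 : N.-tuple R) (s p : R) (dk : nat -> R)
    (v : N.-tuple R -> R) (w : nat -> N.-tuple R -> R) (E : set (N.-tuple R)) :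
  (0 < p)%R -> dk @ \oo --> +oo%R -> (forall k, measurable_fun setT (w k)) ->
  iint_negligible E -> (forall x, ~ E x -> w^~ x @ \oo --> v x) ->
  iint (fun x => iint (fun y => gkernel s p v x y)) <=
  limn_einf (fun k =>
    iint (fun x => iint (fun y => trunc_gkernel x0 (dk k) s p (w k) x y))).
Proof.
move=> p0 dk_oo mw nE wv.
have pointwise x y : ~ E x -> ~ E y -> gkernel s p v x y <=
    limn_einf (fun k => trunc_gkernel x0 (dk k) s p (w k) x y).
  move=> /wv wx /wv wy; have [vxy0|vxy] := eqVneq `|v x - v y|%R 0%R.
    rewrite /gkernel vxy0 powR0 ?gt_eqF // mul0r.
    by apply: limn_einf_ge0 => k; exact: trunc_gkernel_ge0.
  suff /cvg_limn_einf_sup[-> _] :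
    (fun k => trunc_gkernel x0 (dk k) s p (w k) x y) @ \oo --> gkernel s p v x y by [].
  apply: cvg_trans (near_eq_cvg (gkernel_eq_trunc_near x0 s p w x y dk_oo)) _.
  by apply: cvg_gkernel wx wy; rewrite lt_def vxy normr_ge0.
have mtrunc k := measurable_trunc_gkernel x0 (dk k) s p (mw k).
apply: (iint_fatou_ae nE) => [k|k x|x|x Ex].
- apply: (measurable_iint (g := fun x y => trunc_gkernel x0 (dk k) s p (w k) x y)) => //.
  exact: trunc_gkernel_ge0.
- by apply: iint_ge0 => y; exact: trunc_gkernel_ge0.
- by apply: iint_ge0 => y; exact: gkernel_ge0.
apply: (iint_fatou_ae nE) => [k|k y|y|y Ey].
- exact: measurable_fun_pair2 x (mtrunc k).
- exact: trunc_gkernel_ge0.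
- exact: gkernel_ge0.
exact: pointwise.
Qed.

Lemma J_infty_le_limn_einf_J_delta (Om : set (N.-tuple R)) (s p : R) (dn : nat -> R)
    (u : N.-tuple R -> R) (un : nat -> N.-tuple R -> R) :
  (0 < p)%R -> Om !=set0 -> dn @ \oo --> +oo%R -> inLp Om p u ->
  (forall n, inLp Om p (un n)) -> Lp_cvg Om p un u ->
  J_infty Om s p u <= limn_einf (fun n => J_delta Om s p (dn n) (un n)).
Proof.
move=> p0 [x0 Ox0] dn_oo [mu _] mun un_u.
apply: ge0_lee_gt; first by apply: limn_einf_ge0 => n; exact: J_delta_ge0.
move=> c /(limn_einf_lt_subseq (eps := fun k => (2^-1 ^+ k.+1)%R) un_u)[k|phi phiP].
  by rewrite exprn_gt0 // invr_gt0.
have dphi_oo : (dn \o phi) @ \oo --> +oo%R.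
  apply/cvgryPgt => M; have [m _ Mdn] := (cvgryPgt dn).1 dn_oo M.
  exists m => // k /= mk; apply: Mdn; have [kphi _ _] := phiP k.
  exact: leq_trans mk kphi.
have [E nE cvgE] : exists2 E, iint_negligible E &
    forall x, ~ E x -> (fun k => zext Om (un (phi k)) x) @ \oo --> zext Om u x.
  apply: (ae_cvg_of_fast_Lp_cvg p0 mu (fun k => (mun (phi k)).1)) => k.
  by rewrite -iint_on_zext ?gt_eqF //; case: (phiP k).
apply: le_trans (gagliardo_le_limn_einf_trunc x0 s p0 dphi_oo
  (fun k => (mun (phi k)).1) nE cvgE) _.
apply: limn_einf_le => k; apply: le_trans (iint_trunc_gkernel_le_J_delta _ _ _ _ Ox0) _.
by have [_ _ /ltW] := phiP k.
Qed.

Lemma Lp_cvg_cst (Om : set (N.-tuple R)) (p : R) (u : N.-tuple R -> R) :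
  p != 0%R -> Lp_cvg Om p (fun=> u) u.
Proof.
move=> p0; rewrite /Lp_cvg iint_on_zext //.
have -> : (fun x => (`|zext Om u x - zext Om u x| `^ p)%:E) = fun=> 0.
  by apply/funext => x; rewrite subrr normr0 powR0.
by rewrite iint0; exact: cvg_cst.
Qed.

End liminf_inequality.

Unset Implicit Arguments.
Set Strict Implicit.

Theorem lemma5p1 (R : realType) (N : nat) (Om : set (N.-tuple R)) (s p : R) :
  (0 < N)%N -> domain Om -> ebounded Om -> lipschitz_boundary Om ->
  0 < s < 1 -> 1 < p ->
  Gamma_cvg_pinfty Om p (fun d u => J_delta Om s p d u) (J_infty Om s p).
Proof.
move=> _ [Om0 _ _] _ _ _ p1 dn dn_oo u u_Lp; have p0 : 0 < p := lt_trans ltr01 p1.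
split=> [un un_Lp un_u|]; first exact: J_infty_le_limn_einf_J_delta.
exists (fun=> u) => //; split; first by apply: Lp_cvg_cst; rewrite gt_eqF.
by apply: limn_esup_le => n; exact: J_delta_le_J_infty.
Qed.
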